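(* Let $m \in \mathbb{N}$ and let $G$ be a subdivision of the star $K_{1,m}$ (i.e., a graph obtained from $K_{1,m}$ by replacing its edges with internally disjoint paths of arbitrary positive lengths). If $m=1$, then the total graph $T(G)$ is equitably $k$-choosable for every $k \geq 3$. If $m \geq 2$, then $T(G)$ is equitably $k$-choosable for every $k \geq m+1$.
   Context: All graphs are finite and simple. The total graph $T(G)$ of a graph $G$ has vertex set $V(G)\cup E(G)$, two elements being adjacent in $T(G)$ iff they are adjacent or incident in $G$. A $k$-assignment $L$ for a graph $G$ assigns to each vertex $v$ a set $L(v)$ of exactly $k$ colors. An equitable $L$-coloring of $G$ is a proper coloring $f$ of $G$ with $f(v)\in L(v)$ for all $v$, such that no color is used on more than $\lceil |V(G)|/k\rceil$ vertices. $G$ is equitably $k$-choosable if it has an equitable $L$-coloring for every $k$-assignment $L$. *)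

From mathcomp Require Import all_boot.
Set Implicit Arguments. Unset Strict Implicit. Unset Printing Implicit Defensive.

Definition simple_graph (V : finType) (e : rel V) : Prop :=
  symmetric e /\ irreflexive e.

Definition is_edge (V : finType) (e : rel V) (A : {set V}) : bool :=
  [exists x, exists y, e x y && (A == [set x; y])].

Definition edge_t (V : finType) (e : rel V) : finType :=
  {A : {set V} | is_edge e A}.

Definition total_vertex (V : finType) (e : rel V) : finType :=
  (V + edge_t e)%type.

Definition total_adj (V : finType) (e : rel V) : rel (total_vertex e) :=
  fun a b =>
    match a, b with
    | inl u, inl v => e u v
    | inl u, inr f => u \in val f
    | inr f, inl u => u \in val f
    | inr f, inr g => (f != g) && ~~ [disjoint val f & val g]
    end.

Definition k_assignment (W : finType) (k : nat) (L : W -> seq nat) : Prop :=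
  forall w, uniq (L w) /\ size (L w) = k.

Definition equitable_L_coloring (W : finType) (r : rel W) (k : nat)
    (L : W -> seq nat) (f : W -> nat) : Prop :=
  (forall w, f w \in L w) /\
  (forall u v, r u v -> f u != f v) /\
  (forall c : nat, #|[set w | f w == c]| <= (#|W| + k.-1) %/ k).
  (* (#|W| + k - 1) / k = ceil(#|W| / k) for k >= 1 *)

Definition equitably_k_choosable (W : finType) (r : rel W) (k : nat) : Prop :=
  forall L : W -> seq nat, k_assignment k L ->
    exists f : W -> nat, equitable_L_coloring r k L f.

(* Arm i (i < m) is replaced by a path of length l i >= 1.  Vertices: the
   centre (None) and, for each arm i, internal/end vertices Some (i, j) with
   j < l i, lying at distance j+1 from the centre along arm i. *)
Definition star_sub_vertex (m : nat) (l : 'I_m -> nat) : finType :=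
  option {i : 'I_m & 'I_(l i)}.

Definition star_sub_adj (m : nat) (l : 'I_m -> nat) : rel (star_sub_vertex l) :=
  fun a b =>
    match a, b with
    | None, None => false
    | None, Some y => val (tagged y) == 0
    | Some x, None => val (tagged x) == 0
    | Some x, Some y =>
        (tag x == tag y) &&
        (((val (tagged x)).+1 == val (tagged y)) ||
         ((val (tagged y)).+1 == val (tagged x)))
    end.

From mathcomp Require Import all_boot zify.

Set Implicit Arguments. Unset Strict Implicit. Unset Printing Implicit Defensive.
Section Peeling.
Variables (W : finType) (r : rel W) (k : nat).

Definition nbr_count (R : {set W}) (x : W) := #|[set y in R | r x y]|.

Definition peel_condition (R S : {set W}) :=
  forall t, 0 < t -> #|[set x in S | t <= nbr_count R x]| <= k - t.

Inductive peelable : {set W} -> Prop :=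
| peelable_small (X : {set W}) : #|X| <= k -> peelable X
| peelable_step (X R : {set W}) : R \subset X -> #|X| = #|R| + k ->
    peel_condition R (X :\: R) -> peelable R -> peelable X.

(* Listing S by decreasing number of neighbours in R, the [j]-th vertex has
   at most [k - j - 1] neighbours in R, i.e. it can be coloured greedily. *)
Lemma peel_condition_ranked (R S : {set W}) : #|S| <= k -> peel_condition R S ->
  exists s : seq W,
    [/\ uniq s, S =i s & {in s, forall x, nbr_count R x + index x s < k}].
Proof.
move=> leSk cond.
pose geR x y := nbr_count R y <= nbr_count R x.
have geR_tr : transitive geR by move=> y x z /[swap]; apply: leq_trans.
have geR_refl : reflexive geR by move=> x; apply: leqnn.
have geR_total : total geR by move=> x y; apply: leq_total.
pose s := sort geR (enum S).
have s_uniq : uniq s by rewrite sort_uniq enum_uniq.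
have memS : S =i s by move=> x; rewrite mem_sort mem_enum.
exists s; split=> // x xs; set j := index x s.
have s_size : size s = #|S| by rewrite size_sort cardE.
have j_lt : j < size s by rewrite index_mem.
have above : {subset take j.+1 s <= [set y in S | nbr_count R x <= nbr_count R y]}.
  move=> y yt; have ys := mem_take yt; rewrite inE memS ys /=.
  apply: (sorted_leq_index geR_tr geR_refl (sort_sorted geR_total (enum S))) => //.
  by rewrite -ltnS; apply: index_ltn.
have := subset_leq_card (introT subsetP above); move/card_uniqP: (take_uniq j.+1 s_uniq) => ->.
rewrite size_takel //; case: (posnP (nbr_count R x)) => [-> _ | pos]; first by lia.
by move/leq_trans/(_ (cond _ pos)); lia.
Qed.

Lemma peel_card_excl (R S T : {set W}) t : T \subset S ->
  {in T, forall x, nbr_count R x < t} ->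
  #|[set x in S | t <= nbr_count R x]| <= #|S| - #|T|.
Proof.
move=> sTS low; rewrite -[in #|T|](setIidPr sTS) -cardsD.
apply/subset_leq_card/subsetP => x; rewrite !inE => /andP [xS le_t]; rewrite xS andbT.
by apply: contraTN le_t => /low; rewrite ltnNge.
Qed.

Lemma free_color (s F : seq nat) : uniq s -> size F < size s ->
  exists2 c, c \in s & c \notin F.
Proof.
move=> s_uniq ltFs.
have [/hasP [c cs cF] | /hasPn sF] := boolP (has [predC F] s); first by exists c.
by move: ltFs; rewrite ltnNge uniq_leq_size // => c /sF /negPn.
Qed.

Variable L : W -> seq nat.
Hypothesis L_k : k_assignment k L.
Hypotheses (r_sym : symmetric r) (r_irr : irreflexive r).

Definition L_coloring_on (A : {set W}) (f : W -> nat) :=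
  {in A, forall w, f w \in L w} /\ {in A &, forall u v, r u v -> f u != f v}.

Lemma extend_coloring (A B : {set W}) f x : x \notin A -> B \subset A ->
  L_coloring_on A f -> {in B &, injective f} ->
  #|[set y in A | r x y] :|: B| < k ->
  exists2 g, L_coloring_on (x |: A) g /\ {in x |: B &, injective g} & {in A, g =1 f}.
Proof.
move=> xA sBA [fL fP] fI ltk.
pose F := [seq f y | y <- enum ([set y in A | r x y] :|: B)].
have [c cL cF] : exists2 c, c \in L x & c \notin F.
  by case: (L_k x) => uL szL; apply: free_color; rewrite // szL size_map -cardE.
pose g y := if y == x then c else f y.
have gA : {in A, g =1 f} by move=> y yA; rewrite /g; case: eqP => // yx; rewrite -yx yA in xA.
have g_free y : y \in A -> r x y || (y \in B) -> g x != g y.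
  move=> yA xy; rewrite /g eqxx -/(g y) gA //; apply: contraNneq cF => ->.
  by apply: map_f; rewrite mem_enum !inE yA.
exists g => //; split; first split.
- by move=> w /setU1P [-> | wA]; [rewrite /g eqxx | rewrite gA ?fL].
- move=> u v /setU1P [-> | uA] /setU1P [-> | vA] ruv.
  + by rewrite r_irr in ruv.
  + by apply: g_free; rewrite ?ruv.
  + by rewrite eq_sym; apply: g_free; rewrite // r_sym ruv.
  + by rewrite !gA ?fP.
- have Bfree y : y \in B -> g x != g y.
    by move=> yB; apply: g_free; rewrite ?(subsetP sBA y yB) ?yB ?orbT.
  move=> u v /setU1P [-> | uB] /setU1P [-> | vB] // guv.
  + by move/eqP: (Bfree v vB).
  + by move/eqP: (Bfree u uB); rewrite guv.
  + by apply: fI; rewrite // -gA ?(subsetP sBA u uB) // -[f v]gA ?(subsetP sBA v vB).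
Qed.

Lemma color_along (R : {set W}) g (s : seq W) :
  uniq s -> {in s, forall x, x \notin R} ->
  {in s, forall x, nbr_count R x + index x s < k} -> L_coloring_on R g ->
  exists2 f, L_coloring_on (R :|: [set:: s]) f /\ {in s &, injective f} & {in R, f =1 g}.
Proof.
elim/last_ind: s => [|s x IH].
  by move=> _ _ _ gR; exists g; rewrite // set_nil setU0.
rewrite rcons_uniq => /andP [xs s_uniq] notR ranked gR.
have [|||f [fR fI] fg] := IH s_uniq.
- by move=> y ys; apply: notR; rewrite mem_rcons inE ys orbT.
- move=> y ys; have := ranked y; rewrite mem_rcons inE ys orbT -cats1 index_cat ys.
  exact.
- exact: gR.
have set_rcons : [set:: rcons s x] = x |: [set:: s].
  by apply/setP => y; rewrite !inE mem_rcons inE.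
have x_out : x \notin R :|: [set:: s].
  by rewrite !inE negb_or notR ?mem_rcons ?inE ?eqxx.
have [||h [hR hI] hf] := extend_coloring x_out (subsetUr R [set:: s]) fR.
- by move=> u v; rewrite !inE; apply: fI.
- have := ranked x; rewrite mem_rcons inE eqxx -cats1 index_cat (negbTE xs) /= eqxx addn0.
  move=> /(_ isT); apply: leq_ltn_trans.
  have card_s : #|[set:: s]| = size s by rewrite cardsE (card_uniqP s_uniq).
  rewrite -card_s; apply: leq_trans (leq_card_setU _ _).
  apply: subset_leq_card; apply/subsetP => y; rewrite !inE.
  by case: (y \in s); rewrite ?orbT ?orbF.
- exists h; first split.
  + by rewrite set_rcons setUCA.
  + by move=> u v us vs; apply: hI; rewrite -set_rcons inE.
  + by move=> y yR; rewrite hf ?fg // inE yR.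
Qed.

Lemma greedy_extend (R S : {set W}) g :
  [disjoint R & S] -> #|S| <= k -> peel_condition R S -> L_coloring_on R g ->
  exists2 f, L_coloring_on (R :|: S) f /\ {in S &, injective f} & {in R, f =1 g}.
Proof.
move=> dRS leSk cond gR; have [s [s_uniq Ss ranked]] := peel_condition_ranked leSk cond.
have S_set : S = [set:: s] by apply/setP => x; rewrite inE Ss.
have notR : {in s, forall x, x \notin R}.
  by move=> x; rewrite -Ss => xS; rewrite (disjointFl dRS xS).
have [f [fR fI] fg] := color_along s_uniq notR ranked gR.
exists f => //; split; first by rewrite S_set.
by move=> u v; rewrite !Ss; apply: fI.
Qed.

Definition equitable_on (X : {set W}) (f : W -> nat) :=
  L_coloring_on X f /\ forall c, #|[set w in X | f w == c]| <= (#|X| + k.-1) %/ k.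

Lemma color_class_inj (S : {set W}) (f : W -> nat) c :
  {in S &, injective f} -> #|[set w in S | f w == c]| <= 1.
Proof.
move=> fI; apply/card_le1_eqP => u v; rewrite !inE => /andP [uS /eqP fu] /andP [vS /eqP fv].
by apply: fI; rewrite ?fu ?fv.
Qed.

Lemma peel_condition0 (S : {set W}) : peel_condition set0 S.
Proof.
move=> t t_gt0; rewrite eq_card0 // => x; rewrite !inE leqNgt.
by rewrite /nbr_count (@eq_card0 _ [set y in set0 | r x y]) ?t_gt0 ?andbF // => y; rewrite !inE.
Qed.

Lemma peelable_equitable X : 0 < k -> peelable X -> exists f, equitable_on X f.
Proof.
move=> k_gt0; elim=> {X} [X leXk | X R sRX cardX cond _ [g [gR gC]]].
  have d0 : [disjoint set0 & X] by rewrite -setI_eq0 set0I.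
  have [|f [fX fI] _] := @greedy_extend set0 X (fun _ => 0) d0 leXk (peel_condition0 X).
  - by split=> [w|u v]; rewrite inE.
  exists f; split; first by rewrite -[X]set0U.
  move=> c; have [->|[w wX]] := set_0Vmem X.
    by rewrite eq_card0 // => w; rewrite !inE.
  apply: leq_trans (color_class_inj c fI) _.
  have : 0 < #|X| by apply/card_gt0P; exists w.
  by rewrite divn_gt0 //; lia.
have dRS : [disjoint R & X :\: R].
  by rewrite -setI_eq0; apply/eqP/setP => x; rewrite !inE; case: (x \in R).
have cardS : #|X :\: R| = k by rewrite cardsD (setIidPr sRX) cardX addKn.
have [f [fX fI] fg] := greedy_extend dRS (eq_leq cardS) cond gR.
have RXR : R :|: X :\: R = X by rewrite -{1}(setIidPr sRX) setID.
exists f; split; first by rewrite -RXR.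
move=> c; have sub : [set w in X | f w == c] \subset
    [set w in R | g w == c] :|: [set w in X :\: R | f w == c].
  apply/subsetP => w; rewrite -{1}RXR !inE => /andP [/orP [wR | wXR] fwc].
    by rewrite wR -fg // fwc.
  by rewrite wXR fwc orbT.
apply: leq_trans (subset_leq_card sub) _; apply: leq_trans (leq_card_setU _ _) _.
have -> : (#|X| + k.-1) %/ k = (#|R| + k.-1) %/ k + 1.
  by rewrite cardX -addnA [k + _]addnC addnA divnDr ?dvdnn // divnn k_gt0.
by apply: leq_add; [apply: gC | apply: color_class_inj].
Qed.

End Peeling.
Lemma embedding_equitably_choosable (W W' : finType) (r : rel W) (r' : rel W') k
    (phi : W -> W') :
  0 < k -> symmetric r' -> irreflexive r' -> injective phi ->
  {homo phi : a b / r a b >-> r' a b} -> peelable r' k (phi @: setT) ->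
  equitably_k_choosable r k.
Proof.
move=> k_gt0 sym' irr' phi_inj phi_hom peel L L_k.
pose L' v := if [pick a | phi a == v] is Some a then L a else iota 0 k.
have L'phi a : L' (phi a) = L a.
  by rewrite /L'; case: pickP => [a' /eqP/phi_inj -> // | /(_ a)]; rewrite eqxx.
have L'_k : k_assignment k L'.
  by move=> v; rewrite /L'; case: pickP => [a _ | _]; [apply: L_k | rewrite iota_uniq size_iota].
have [f [[fL fP] fC]] := peelable_equitable L'_k sym' irr' k_gt0 peel.
exists (f \o phi); split; [|split].
- by move=> a; rewrite /= -L'phi fL // imset_f.
- by move=> a b rab; apply: fP; rewrite ?imset_f ?phi_hom.
move=> c; rewrite -(card_imset _ phi_inj) -[#|W|]cardsT -(card_imset _ phi_inj).
apply: leq_trans (fC c); apply: subset_leq_card; apply/subsetP => _ /imsetP [a + ->].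
by rewrite !inE imset_f.
Qed.

Lemma card_ord_lt n a : a <= n -> #|[set q : 'I_n | q < a]| = a.
Proof.
move=> le_an; have -> : [set q : 'I_n | q < a] = widen_ord le_an @: [set: 'I_a].
  apply/setP => q; rewrite inE; apply/idP/imsetP => [lt_qa | [j _ ->]]; last by rewrite /= ltn_ord.
  by exists (Ordinal lt_qa) => //; apply: val_inj.
rewrite card_imset ?cardsT ?card_ord //.
by move=> i j [] /val_inj.
Qed.

Lemma decrease_sum (I : finType) (P : I -> nat) t : t <= \sum_i P i ->
  exists P' : I -> nat, (forall i, P' i <= P i) /\ \sum_i P' i + t = \sum_i P i.
Proof.
elim: t => [|t IH] le_tP; first by exists P; rewrite addn0.
have [P1 [leP1 sumP1]] := IH (ltnW le_tP).
have [i P1i | P1_0] := pickP (fun i => 0 < P1 i); last first.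
  by move: le_tP; rewrite -sumP1 big1 => [|i _]; [lia | move: (P1_0 i); case: (P1 i)].
exists (fun j => if j == i then (P1 j).-1 else P1 j); split.
  by move=> j; case: eqP => _; [apply: leq_trans (leq_pred _) (leP1 j) | apply: leP1].
rewrite -sumP1 (bigD1 i) // [in RHS](bigD1 i) //= eqxx.
by rewrite (eq_bigr P1) => [|j /negbTE ->] //; lia.
Qed.

Lemma decrease_sum_at (I : finType) (P : I -> nat) b d t :
  d <= P b -> d <= t <= \sum_i P i ->
  exists P' : I -> nat,
    [/\ forall i, P' i <= P i, P' b + d <= P b & \sum_i P' i + t = \sum_i P i].
Proof.
move=> le_d /andP [le_dt le_t].
pose P1 j := if j == b then P b - d else P j.
have sumP1 : \sum_i P1 i + d = \sum_i P i.
  rewrite (bigD1 b) // [RHS](bigD1 b) //= /P1 eqxx.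
  by rewrite (eq_bigr P) => [|j /negbTE -> //]; rewrite addnAC subnK.
have [|P' [le_P'P1 sumP']] := @decrease_sum _ P1 (t - d); first by lia.
exists P'; split.
- move=> i; apply: leq_trans (le_P'P1 i) _; rewrite /P1; case: eqP => [-> |] //.
  exact: leq_subr.
- by have := le_P'P1 b; rewrite /P1 eqxx; lia.
- by rewrite -sumP1 -sumP'; lia.
Qed.

Section Spider.
Variable m : nat.

Definition spider_adj (x y : option ('I_m * nat)) : bool :=
  match x, y with
  | None, None => false
  | None, Some (_, q) | Some (_, q), None => q < 2
  | Some (i, q), Some (j, q') =>
      if i == j then (q < q' <= q.+2) || (q' < q <= q'.+2) else (q == 0) && (q' == 0)
  end.

Lemma spider_adj_sym : symmetric spider_adj.
Proof.
move=> [[i q]|] [[j q']|] //=; rewrite eq_sym; case: eqP => _ //=.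
  by rewrite orbC.
by rewrite andbC.
Qed.

Lemma spider_adj_irr : irreflexive spider_adj.
Proof. by move=> [[i q]|] //=; rewrite eqxx; lia. Qed.

Variable N : nat.
Local Notation V := (option ('I_m * 'I_N.+1)).

Definition of_model (x : V) : option ('I_m * nat) := omap (fun p => (p.1, val p.2)) x.
Definition to_model (c : option ('I_m * nat)) : V := omap (fun p => (p.1, inord p.2)) c.

Lemma of_modelK : cancel of_model to_model.
Proof. by case=> [[i q]|] //=; rewrite inord_val. Qed.

Lemma to_modelK c : (if c is Some (_, q) then q <= N else true) -> of_model (to_model c) = c.
Proof. by case: c => [[i q]|] //= le_q; rewrite inordK. Qed.

Definition model_adj : rel V := fun x y => spider_adj (of_model x) (of_model y).

Lemma model_adj_sym : symmetric model_adj.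
Proof. by move=> x y; apply: spider_adj_sym. Qed.

Lemma model_adj_irr : irreflexive model_adj.
Proof. by move=> x; apply: spider_adj_irr. Qed.

Definition arms_set (P : 'I_m -> nat) : {set V} :=
  [set x : V | if x is Some (i, q) then q < P i else true].

Definition centre_edges : {set V} :=
  [set x : V | if x is Some (_, q) then q == 0 :> nat else false].

Lemma card_centre_edges : #|centre_edges| <= m.
Proof.
apply: (@leq_trans #|[set Some (i, ord0) | i : 'I_m] : {set V}|).
  apply/subset_leq_card/subsetP => -[[i q]|]; rewrite !inE // => /eqP q0.
  by apply/imsetP; exists i; rewrite // (_ : q = ord0) //; apply: val_inj.
by rewrite card_imset ?card_ord // => i j [].
Qed.

Lemma card_arms_set P : (forall i, P i <= N.+1) -> #|arms_set P| = (\sum_i P i).+1.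
Proof.
move=> leP; pose Y := [set p : 'I_m * 'I_N.+1 | p.2 < P p.1].
have -> : arms_set P = None |: [set Some p | p in Y].
  apply/setP => -[p|]; rewrite !inE //= (mem_imset _ _ (@Some_inj _)) inE.
  by case: p.
rewrite cardsU1 card_imset; last exact: Some_inj.
rewrite (negbTE (_ : None \notin _)) ?add1n; last by apply/imsetP => -[].
rewrite -sum1_card (eq_bigl (fun p : 'I_m * 'I_N.+1 => xpredT p.1 && (p.2 < P p.1))) => [|p]; last by rewrite inE.
rewrite -(pair_big_dep xpredT (fun i (q : 'I_N.+1) => q < P i) (fun _ _ => 1)) /=.
by congr _.+1; apply: eq_bigr => i _; rewrite sum1_card -[RHS](card_ord_lt (leP i)) cardsE.
Qed.

Lemma arms_set_subset P P' : (forall i, P' i <= P i) -> arms_set P' \subset arms_set P.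
Proof. by move=> le_P'P; apply/subsetP => -[[i q]|]; rewrite !inE // => /leq_trans; apply. Qed.

Section ArmNeighbours.
Variables (P' : 'I_m -> nat) (R : {set V}).
Hypothesis sR : R \subset arms_set P'.
Local Notation nb := (nbr_count model_adj R).

Lemma arm_nbr i (q : 'I_N.+1) y : P' i <= q -> y \in R -> model_adj (Some (i, q)) y ->
  [\/ y = None /\ q < 2,
      exists2 q' : 'I_N.+1, y = Some (i, q') & q' < P' i /\ q <= q'.+2 |
      q = 0 :> nat /\ y \in centre_edges].
Proof.
move=> le_q yR; have := subsetP sR y yR.
case: y yR => [[j q'] | ] yR; rewrite inE /=; last by move=> _ q2; constructor 1.
move=> lt_q'; rewrite /model_adj /=.
case: (eqVneq i j) => [<- | _] in lt_q' * => adj.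
  by constructor 2; exists q' => //; lia.
by case/andP: adj => /eqP q0 /eqP q'0; constructor 3; rewrite inE /= q'0.
Qed.

Lemma nbr_count_far i (q : 'I_N.+1) : P' i + 2 <= q -> nb (Some (i, q)) = 0.
Proof.
move=> le_q; apply: eq_card0 => y; rewrite !inE; apply/andP => -[yR adj].
have le_q' : P' i <= q by lia.
by case: (arm_nbr le_q' yR adj) => [[_ q2]|[q' _ ?]|[q0 _]]; lia.
Qed.

Lemma nbr_count_next i (q : 'I_N.+1) : P' i < q -> nb (Some (i, q)) <= 1.
Proof.
move=> lt_q; apply/card_le1_eqP => y z; rewrite !inE => /andP [yR yadj] /andP [zR zadj].
have le_q := ltnW lt_q.
case: (arm_nbr le_q yR yadj) => [[-> lt2]|[q1 -> h1]|[q0 _]];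
case: (arm_nbr le_q zR zadj) => [[-> lt2']|[q2 -> h2]|[q0' _]] //; try lia.
by congr (Some (_, _)); apply: ord_inj; lia.
Qed.

Lemma nbr_count_le2 i (q : 'I_N.+1) : 0 < q -> P' i <= q -> nb (Some (i, q)) <= 2.
Proof.
move=> q_gt0 le_q.
pose far : V := if q == 1 :> nat then None else Some (i, inord (q - 2)).
apply: (@leq_trans #|[set far; Some (i, inord q.-1)]|); last by rewrite cards2; case: (_ != _).
apply/subset_leq_card/subsetP => y; rewrite !inE => /andP [yR adj].
have q_le : q <= N by rewrite -ltnS.
case: (arm_nbr le_q yR adj) => [[-> lt2]|[q' -> [lt_q' le_q']]|[q0 _]]; last by lia.
  by rewrite /far (_ : q == 1 :> nat) //; lia.
case: (ltnP q' q.-1) => [lt_q'q | le_qq'].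
  apply/orP; left; rewrite /far ifF; last by lia.
  by apply/eqP; congr (Some (_, _)); apply: ord_inj; rewrite inordK; lia.
by apply/orP; right; apply/eqP; congr (Some (_, _)); apply: ord_inj; rewrite inordK; lia.
Qed.

Lemma nbr_count_root i (q : 'I_N.+1) : P' i <= q -> q = 0 :> nat ->
  nb (Some (i, q)) <= (None \in R) + #|R :&: centre_edges|.
Proof.
move=> le_q q0; rewrite /nbr_count (cardsD1 None); apply: leq_add.
  by rewrite inE; case: (None \in R); rewrite ?leq_b1.
apply/subset_leq_card/subsetP => y; rewrite in_setD1 inE => /andP [yN /andP [yR adj]].
case: (arm_nbr le_q yR adj) => [[yN' _]|[q' _ ?]|[_ yE]]; last by rewrite in_setI yR.
  by rewrite yN' in yN.
by lia.
Qed.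

Lemma nbr_count_one i (q : 'I_N.+1) : None \notin R -> P' i <= q -> q = 1 :> nat ->
  nb (Some (i, q)) <= P' i.
Proof.
move=> NR le_q q1.
have nbr y : y \in R -> model_adj (Some (i, q)) y -> y = Some (i, ord0) /\ 0 < P' i.
  move=> yR adj; case: (arm_nbr le_q yR adj) => [[yN _]|[q' -> [lt_q' _]]|[q0 _]].
  - by move: yR; rewrite yN (negbTE NR).
  - by split; [congr (Some (_, _)); apply: ord_inj => /= | ]; lia.
  - by lia.
have [P0 | P_gt0] := posnP (P' i).
  rewrite P0 leqn0 cards_eq0; apply/eqP/setP => y; rewrite !inE.
  by apply/andP => -[yR /(nbr y yR) []]; rewrite P0.
apply: leq_trans P_gt0; apply/card_le1_eqP => y z; rewrite !inE.
by move=> /andP [yR /(nbr y yR) [-> _]] /andP [zR /(nbr z zR) [-> _]].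
Qed.

End ArmNeighbours.

Lemma card_centre_edges_disjoint (R S : {set V}) : [disjoint R & S] ->
  #|R :&: centre_edges| + #|S :&: centre_edges| <= m.
Proof.
move=> dRS; have dRSE : R :&: centre_edges :&: (S :&: centre_edges) = set0.
  by rewrite setIACA setIid (disjoint_setI0 dRS) set0I.
rewrite -cardsUI dRSE cards0 addn0 -setIUl.
exact: leq_trans (subset_leq_card (subsetIr _ _)) card_centre_edges.
Qed.

Lemma arms_diff P P' x : x \in arms_set P :\: arms_set P' ->
  exists i (q : 'I_N.+1), [/\ x = Some (i, q), P' i <= q & q < P i].
Proof. by case: x => [[i q]|]; rewrite !inE //= -leqNgt => /andP [le_q lt_q]; exists i, q. Qed.

Lemma card_arms_diff P P' : (forall i, P i <= N.+1) -> (forall i, P' i <= P i) ->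
  #|arms_set P :\: arms_set P'| + \sum_i P' i = \sum_i P i.
Proof.
move=> leP le_P'P; have leP' i : P' i <= N.+1 by apply: leq_trans (leP i).
rewrite cardsD (setIidPr (arms_set_subset le_P'P)) !card_arms_set //.
by rewrite subSS subnK // leq_sum.
Qed.

Variable k : nat.
Hypothesis m_lt_k : m < k.
Local Notation nb := (nbr_count model_adj).

Lemma long_arm_peel P P' b : (forall i, P i <= N.+1) -> (forall i, P' i <= P i) ->
  P' b + 2 < P b -> \sum_i P' i + k = \sum_i P i ->
  peel_condition model_adj k (arms_set P') (arms_set P :\: arms_set P').
Proof.
move=> leP le_P'P lt_b sumP'; have := card_arms_diff leP le_P'P.
set R := arms_set P'; set S := arms_set P :\: R => cardS'.
have cardS : #|S| = k by lia.
have dRS : [disjoint R & S] by have := subxx S; rewrite subsetD disjoint_sym => /andP [].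
have lt_bN : P' b + 2 < N.+1 by apply: leq_trans (leP b).
pose sec : V := Some (b, inord (P' b + 1)); pose lst : V := Some (b, inord (P' b + 2)).
have inS q : P' b <= q < P b -> Some (b, inord q) \in S.
  move=> /andP [le_q lt_q]; rewrite !inE /= inordK -?leqNgt ?le_q ?lt_q //.
  exact: leq_trans lt_q (leP b).
move=> [|[|[|t]]] // _.
- apply: leq_trans (peel_card_excl (T := [set lst]) _ _) _.
  + by rewrite sub1set inS //; lia.
  + by move=> x /set1P ->; rewrite (@nbr_count_far P' R (subxx _)) ?inordK //; lia.
  + by rewrite cardS cards1.
- apply: leq_trans (peel_card_excl (T := [set sec; lst]) _ _) _.
  + by rewrite subUset !sub1set !inS //; lia.
  + move=> x /set2P [] ->; last by rewrite (@nbr_count_far P' R (subxx _)) ?inordK //; lia.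
    by rewrite ltnS (@nbr_count_next P' R (subxx _)) ?inordK //; lia.
  + rewrite cardS cards2 (_ : sec != lst) //.
    by apply/eqP => -[] /(congr1 val) /=; rewrite !inordK; lia.
suff : #|[set x in S | t.+3 <= nb R x]| <= k - t.+3 by [].
set A := [set x in S | _ <= _].
have sAE : A \subset S :&: centre_edges.
  apply/subsetP => x; rewrite in_set => /andP [xS le_t]; rewrite in_setI xS.
  have [i [q [xq le_q _]]] := arms_diff xS; subst x; rewrite inE /=.
  apply: contraTT le_t; rewrite -lt0n -ltnNge => q_gt0.
  by apply: leq_ltn_trans (@nbr_count_le2 P' R (subxx _) _ _ q_gt0 le_q) _.
have [-> | [x xA]] := set_0Vmem A; first by rewrite cards0.
have [xS le_t] : x \in S /\ t.+3 <= nb R x by move: xA; rewrite in_set => /andP.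
have [i [q [xq le_q _]]] := arms_diff xS.
have q0 : q = 0 :> nat.
  by have := subsetP sAE x xA; rewrite in_setI xq => /andP [_]; rewrite inE => /eqP.
have := @nbr_count_root P' R (subxx _) _ _ le_q q0; rewrite -xq.
have := card_centre_edges_disjoint dRS; have := subset_leq_card sAE.
by case: (None \in R); lia.
Qed.

Lemma short_arms_peel P P' b : 0 < N -> (forall i, P i <= 2) -> (forall i, P' i <= P i) ->
  P' b = 0 -> P b = 2 -> \sum_i P' i + k.-1 = \sum_i P i ->
  peel_condition model_adj k (arms_set P' :\ None) (arms_set P :\: (arms_set P' :\ None)).
Proof.
move=> N_gt0 leP2 le_P'P P'b Pb sumP'.
have leP i : P i <= N.+1 by apply: leq_trans (leP2 i) _.
have sumP : \sum_i P i <= m * 2.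
  by rewrite -[m in m * 2]card_ord -sum_nat_const leq_sum.
have := card_arms_set (fun i => leq_trans (le_P'P i) (leP i)); have := card_arms_set leP.
set R := arms_set P' :\ None; set S := arms_set P :\: R => cardP cardP'.
have sR : R \subset arms_set P' by apply: subsetDl.
have NR : None \notin R by rewrite !inE.
have cardR : #|R| = \sum_i P' i by move: cardP'; rewrite (cardsD1 None) inE add1n => -[].
have cardS : #|S| = k.
  rewrite cardsD (setIidPr (subset_trans sR (arms_set_subset le_P'P))) cardP cardR; lia.
have dRS : [disjoint R & S] by have := subxx S; rewrite subsetD disjoint_sym => /andP [].
have memS x : x \in S -> x != None -> exists i (q : 'I_N.+1), [/\ x = Some (i, q), P' i <= q & q < P i].
  move=> xS xN; apply: arms_diff; move: xS; rewrite !inE.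
  by case: x xN => [[i q]|] //= _; rewrite andbT.
pose vb : V := Some (b, inord 1).
have vbS : vb \in S by rewrite !inE /= inordK ?P'b ?Pb.
have nb_vb : nb R vb = 0.
  by apply/eqP; rewrite -leqn0 -P'b (nbr_count_one sR) ?inordK ?P'b.
move=> [|[|t]] // _.
  apply: leq_trans (peel_card_excl (T := [set vb]) _ _) _.
  - by rewrite sub1set.
  - by move=> x /set1P ->; rewrite nb_vb.
  - by rewrite cardS cards1.
suff : #|[set x in S | t.+2 <= nb R x]| <= k - t.+2 by [].
set A := [set x in S | _ <= _].
have sAE : A :\ None \subset S :&: centre_edges.
  apply/subsetP => x; rewrite in_setD1 in_set => /andP [xN /andP [xS le_t]].
  have [i [q [xq le_q lt_q]]] := memS x xS xN; subst x; rewrite in_setI xS inE /=.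
  apply: contraTT le_t; rewrite -lt0n -ltnNge => q_gt0.
  have q1 : q = 1 :> nat by have := leP2 i; lia.
  by apply: leq_ltn_trans (nbr_count_one sR NR le_q q1) _; lia.
have cardA : #|A| = (None \in A) + #|A :\ None| := cardsD1 None A.
have [AE0 | [x xA]] := set_0Vmem (A :\ None).
  rewrite cardA AE0 cards0 addn0; case NA: (None \in A) => //=.
  have := NA; rewrite in_set => /andP [_ le_t].
  have : nb R None <= #|R| by apply/subset_leq_card/subsetP => y; rewrite inE => /andP [].
  move/(leq_trans le_t); rewrite cardR; move: sumP; rewrite -sumP'; lia.
have := xA; rewrite in_setD1 in_set => /andP [xN /andP [xS le_t]].
have [i [q [xq le_q _]]] := memS x xS xN.
have q0 : q = 0 :> nat.
  by have := subsetP sAE x xA; rewrite in_setI xq => /andP [_]; rewrite inE => /eqP.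
move: le_t; rewrite xq => /leq_trans/(_ (nbr_count_root sR le_q q0)).
rewrite (negbTE NR).
have := card_centre_edges_disjoint dRS; have := subset_leq_card sAE.
by case: (None \in A) cardA; lia.
Qed.

Hypothesis k_gt2 : 2 < k.

Lemma arms_set_peelable P : (forall i, P i <= N.+1) -> peelable model_adj k (arms_set P).
Proof.
move: {2}(\sum_i P i) (leqnn (\sum_i P i)) => s; elim: s P => [|s IH] P le_sum leP.
  by apply: peelable_small; rewrite card_arms_set //; lia.
have [small | big] := leqP #|arms_set P| k; first exact: peelable_small.
have le_kP : k <= \sum_i P i by move: big; rewrite card_arms_set.
have [b lt2 | short] := pickP (fun i => 2 < P i).
  have [||P' [le_P'P le_b sumP']] := @decrease_sum_at _ P b (minn (P b) k) k.
  - exact: geq_minl.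
  - by rewrite geq_minr le_kP.
  have leP' i : P' i <= N.+1 by apply: leq_trans (leP i).
  apply: (peelable_step (arms_set_subset le_P'P)).
  - by rewrite !card_arms_set // -sumP'.
  - by apply: (long_arm_peel (b := b)) => //; move: lt2 => /= lt2; lia.
  - by apply: IH => //; lia.
have leP2 i : P i <= 2 by rewrite leqNgt short.
have [b /eqP Pb | no2] := pickP (fun i => P i == 2); last first.
  have : \sum_i P i <= \sum_(i < m) 1.
    by apply: leq_sum => i _; have := leP2 i; have := no2 i => /= /negbT; lia.
  by rewrite sum_nat_const card_ord muln1; lia.
have [||P' [le_P'P le_b sumP']] := @decrease_sum_at _ P b 2 k.-1; rewrite ?Pb //; first by lia.
have leP' i : P' i <= N.+1 by apply: leq_trans (leP i).
have cardR : #|arms_set P' :\ None| = \sum_i P' i.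
  by have := card_arms_set leP'; rewrite (cardsD1 None) inE add1n => -[].
have sumP : \sum_i P i <= m * 2 by rewrite -[m in m * 2]card_ord -sum_nat_const leq_sum.
apply: (@peelable_step _ _ _ _ (arms_set P' :\ None)).
- exact: subset_trans (subsetDl _ _) (arms_set_subset le_P'P).
- by rewrite card_arms_set // cardR -sumP' -addn1 -addnA addn1 prednK //; lia.
- by apply: (short_arms_peel (b := b)) => //; [rewrite -ltnS -Pb leP | lia].
- by apply: peelable_small; rewrite cardR; move: sumP; rewrite -sumP'; lia.
Qed.

End Spider.

Section TotalGraph.
Variables (m : nat) (l : 'I_m -> nat).
Local Notation T := (star_sub_vertex l).
Local Notation e := (@star_sub_adj m l).

Definition arm_code (x : T) : option ('I_m * nat) :=
  omap (fun y : {i : 'I_m & 'I_(l i)} => (tag y, val (tagged y))) x.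

Lemma arm_code_inj : injective arm_code.
Proof.
move=> [[i1 j1]|] [[i2 j2]|] //= [ei ej]; subst i2.
by congr Some; congr existT; apply: val_inj.
Qed.

Lemma arm_code_lt x i j : arm_code x = Some (i, j) -> j < l i.
Proof. by case: x => [[i' j']|] //= [<- <-]. Qed.

Definition parent_code (c : option ('I_m * nat)) : option ('I_m * nat) :=
  if c is Some (i, j.+1) then Some (i, j) else None.

Definition child (x y : T) : bool := (y != None) && (arm_code x == parent_code (arm_code y)).

Lemma star_sub_adjE x y : e x y = child x y || child y x.
Proof.
case: x y => [[i1 [j1 lt1]]|] [[i2 [j2 lt2]]|] //=; rewrite /child /=.
- case: j1 j2 lt1 lt2 => [|j1] [|j2] _ _;
    rewrite //= ?(inj_eq (@Some_inj _)) ?xpair_eqE ?eqSS ?[i2 == i1]eq_sym;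
    by case: (i1 == i2); rewrite ?orbF.
- by case: j1 lt1.
- by case: j2 lt2.
Qed.

Lemma child_code x y : child x y ->
  exists i j, arm_code y = Some (i, j) /\ arm_code x = parent_code (Some (i, j)).
Proof. by case: y => [[i [j lt_j]]|] //= /andP [_ /eqP ->]; exists i, j. Qed.

Lemma child_parent_uniq x1 x2 y : child x1 y -> child x2 y -> x1 = x2.
Proof. by move=> /andP [_ /eqP c1] /andP [_ /eqP c2]; apply: arm_code_inj; rewrite c1 c2. Qed.

Lemma child_uniq x y1 y2 : x != None -> child x y1 -> child x y2 -> y1 = y2.
Proof.
move=> xN /child_code [i1 [j1 [c1 p1]]] /child_code [i2 [j2 [c2 p2]]].
apply: arm_code_inj; rewrite c1 c2 {c1 c2}; move: p1 p2 xN.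
case: j1 => [|j1] /=; first by case: x.
by case: j2 => [|j2] -> //= [-> ->].
Qed.

Lemma edge_child (f : edge_t e) : exists x y, child x y /\ val f = [set x; y].
Proof.
case: f => A /= /existsP [x /existsP [y /andP [exy /eqP ->]]].
by move: exy; rewrite star_sub_adjE => /orP [cxy | cyx]; [exists x, y | exists y, x; rewrite setUC].
Qed.

Lemma child_neq x y : child x y -> x != y.
Proof.
move=> /child_code [i [j [cy cx]]]; apply/eqP => exy; move: cx; rewrite exy cy.
by case: j {cy} => [|j] //= []; lia.
Qed.

Definition depth (x : T) : nat := if arm_code x is Some (_, j) then j.+1 else 0.

(* Positions along arm [i] alternate edge, vertex, edge, ...: the vertex at
   depth [j.+1] sits at [2 j + 1] and the edge below it at [2 j]; the depths
   of the two ends of that edge sum to [2 j + 1]. *)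
Definition tpos (a : total_vertex e) : option ('I_m * nat) :=
  match a with
  | inl x => omap (fun p => (p.1, (2 * p.2).+1)) (arm_code x)
  | inr f => if [pick z in val f | z != None] is Some z
             then omap (fun p => (p.1, (\sum_(w in val f) depth w).-1)) (arm_code z)
             else None
  end.

Lemma tpos_child x y : child x y -> exists i j,
  [/\ arm_code y = Some (i, j), tpos (inl y) = Some (i, (2 * j).+1)
     & tpos (inl x) = if j is j'.+1 then Some (i, (2 * j').+1) else None].
Proof.
move=> /child_code [i [j [cy cx]]]; exists i, j; rewrite /= cy cx.
by split => //; case: j {cy cx}.
Qed.

Lemma tpos_edge (f : edge_t e) x y i j : child x y -> val f = [set x; y] ->
  arm_code y = Some (i, j) -> tpos (inr f) = Some (i, 2 * j).
Proof.
move=> cxy fE cy; have [_ /eqP cx] := andP cxy; rewrite cy in cx; rewrite /tpos.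
have -> : \sum_(w in val f) depth w = (2 * j).+1.
  rewrite fE big_setU1 ?inE ?(child_neq cxy) //= big_set1 /depth cy cx.
  by case: j {cy cx} => /= [|j]; lia.
case: pickP => [z /andP [zf zN] | /(_ y)]; last first.
  by rewrite fE !inE eqxx orbT; case/andP: cxy => ->.
move: zf; rewrite fE => /set2P [zx | ->]; last by rewrite cy.
by move: zN cx; rewrite zx; case: j {cy} => [|j] /=; [case: x {zx cxy fE} | move=> _ ->].
Qed.

Lemma tpos_adj_child x y : child x y -> spider_adj (tpos (inl x)) (tpos (inl y)).
Proof. by case/tpos_child=> i [[|j] [_ -> ->]] /=; rewrite ?eqxx //; lia. Qed.

Lemma tpos_adj_incident (f : edge_t e) x y u : child x y -> val f = [set x; y] ->
  u \in val f -> spider_adj (tpos (inl u)) (tpos (inr f)).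
Proof.
move=> cxy fE; have [i [j [cy py px]]] := tpos_child cxy.
rewrite (tpos_edge cxy fE cy) fE => /set2P [-> | ->]; rewrite ?px ?py.
  by case: j {cy py px} => [|j] /=; rewrite ?eqxx //; lia.
by rewrite /= eqxx; lia.
Qed.

Lemma tpos_adj_edges (f g : edge_t e) : f != g -> ~~ [disjoint val f & val g] ->
  spider_adj (tpos (inr f)) (tpos (inr g)).
Proof.
move=> fg /pred0Pn [w /andP [wf wg]].
have [x1 [y1 [c1 fE]]] := edge_child f; have [x2 [y2 [c2 gE]]] := edge_child g.
have [i1 [j1 [cy1 _ _]]] := tpos_child c1; have [i2 [j2 [cy2 _ _]]] := tpos_child c2.
rewrite (tpos_edge c1 fE cy1) (tpos_edge c2 gE cy2).
have y12 : y1 != y2.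
  apply: contraNneq fg => y12; apply/eqP/val_inj; rewrite fE gE -y12.
  by rewrite (child_parent_uniq c1 (_ : child x2 y1)) // y12.
have [_ /eqP cx1] := andP c1; have [_ /eqP cx2] := andP c2.
rewrite cy1 in cx1; rewrite cy2 in cx2.
move: wf wg; rewrite fE gE => /set2P [] -> /set2P [] e12.
- have [x1N | x1N] := eqVneq x1 None; last first.
    by case/eqP: y12; apply: (child_uniq x1N c1); rewrite e12.
  move: cx1 cx2; rewrite -e12 x1N; case: j1 cy1 => [|j1] //= cy1 _.
  case: j2 cy2 => [|j2] //= cy2 _; case: (eqVneq i1 i2) => [i12 | //].
  by case/eqP: y12; apply: arm_code_inj; rewrite cy1 cy2 i12.
- move: cx1; rewrite e12 cy2; case: j1 {cy1} => [|j1] //= [-> ->].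
  by rewrite eqxx /=; lia.
- move: cx2; rewrite -e12 cy1; case: j2 {cy2} => [|j2] //= [-> ->].
  by rewrite eqxx /=; lia.
- by rewrite e12 eqxx in y12.
Qed.

Lemma tpos_adj : {homo tpos : a b / total_adj a b >-> spider_adj a b}.
Proof.
move=> [u|f] [v|g] /=.
- rewrite star_sub_adjE => /orP [] c; first exact: tpos_adj_child.
  by rewrite spider_adj_sym; apply: tpos_adj_child.
- by have [x [y [cxy gE]]] := edge_child g; apply: tpos_adj_incident cxy gE.
- have [x [y [cxy fE]]] := edge_child f.
  by rewrite spider_adj_sym; apply: tpos_adj_incident cxy fE.
- by case/andP; apply: tpos_adj_edges.
Qed.

Lemma tpos_edge_even (f : edge_t e) : exists i j, tpos (inr f) = Some (i, 2 * j).
Proof.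
have [x [y [cxy fE]]] := edge_child f; have [i [j [cy _ _]]] := tpos_child cxy.
by exists i, j; apply: tpos_edge cxy fE cy.
Qed.

Lemma tpos_inj : injective tpos.
Proof.
move=> [x|f] [y|g].
- rewrite /=; case cx: (arm_code x) => [[i1 j1]|]; case cy: (arm_code y) => [[i2 j2]|] //=.
    case=> i12 j12; congr inl; apply: arm_code_inj.
    by rewrite cx cy i12; congr (Some (_, _)); lia.
  by move=> _; congr inl; apply: arm_code_inj; rewrite cx cy.
- have [i [j ->]] := tpos_edge_even g.
  by rewrite /=; case: (arm_code x) => [[i1 j1]|] //= [_]; lia.
- have [i [j ->]] := tpos_edge_even f.
  by rewrite /=; case: (arm_code y) => [[i1 j1]|] //= [_]; lia.
have [x1 [y1 [c1 fE]]] := edge_child f; have [x2 [y2 [c2 gE]]] := edge_child g.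
have [i1 [j1 [cy1 _ _]]] := tpos_child c1; have [i2 [j2 [cy2 _ _]]] := tpos_child c2.
rewrite (tpos_edge c1 fE cy1) (tpos_edge c2 gE cy2) => -[i12 j12].
have y12 : y1 = y2 by apply: arm_code_inj; rewrite cy1 cy2 i12; congr (Some (_, _)); lia.
rewrite y12 in c1; congr inr; apply: val_inj.
by rewrite fE gE y12 (child_parent_uniq c1 c2).
Qed.

Lemma arm_code_onto i j : j < l i -> exists x, arm_code x = Some (i, j).
Proof. by move=> lt_j; exists (Some (Tagged (fun i => 'I_(l i)) (Ordinal lt_j))). Qed.

Lemma tpos_range c :
  (exists a, tpos a = c) <-> (if c is Some (i, q) then q < 2 * l i else true).
Proof.
split=> [[[x|f] <-] | ].
- by rewrite /=; case cx: (arm_code x) => [[i j]|] //=; have := arm_code_lt cx; lia.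
- have [x [y [cxy fE]]] := edge_child f; have [i [j [cy _ _]]] := tpos_child cxy.
  by rewrite (tpos_edge cxy fE cy); have := arm_code_lt cy; lia.
case: c => [[i q] lt_q | _]; last by exists (inl None).
have q_eq : q = odd q + 2 * q./2 by rewrite mul2n odd_double_half.
have [y cy] : exists y, arm_code y = Some (i, q./2) by apply: arm_code_onto; lia.
case: (odd q) q_eq => /= q_eq.
  by exists (inl y); rewrite /= cy /=; congr (Some (_, _)); lia.
have [x cx] : exists x, arm_code x = parent_code (Some (i, q./2)).
  by case: q./2 cy => [|j] cy; [exists None | apply: arm_code_onto; have := arm_code_lt cy; lia].
have cxy : child x y by rewrite /child cx cy; case: (y) cy => //= _ _; rewrite eqxx.
have is_e : is_edge e [set x; y].
  by apply/existsP; exists x; apply/existsP; exists y; rewrite star_sub_adjE cxy eqxx.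
pose f : edge_t e := exist (fun A : {set T} => is_edge e A) _ is_e.
exists (inr f); rewrite (tpos_edge (f := f) cxy _ cy) //.
by congr (Some (_, _)); lia.
Qed.

End TotalGraph.

Lemma total_star_sub_choosable m (l : 'I_m -> nat) k : 2 < k -> m < k ->
  equitably_k_choosable (@total_adj _ (@star_sub_adj m l)) k.
Proof.
move=> k_gt2 m_lt_k; pose N := \sum_i 2 * l i.
have le_lN i : 2 * l i <= N by rewrite /N (bigD1 i) //= leq_addr.
have tposK (a : total_vertex (@star_sub_adj m l)) : of_model (to_model N (tpos a)) = tpos a.
  apply: to_modelK; have /tpos_range : exists b : total_vertex (@star_sub_adj m l), tpos b = tpos a by exists a.
  by case: (tpos a) => [[i q]|] // lt_q; apply: leq_trans (ltnW lt_q) (le_lN i).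
apply: (embedding_equitably_choosable (r' := @model_adj m N) (phi := to_model N \o @tpos m l)).
- exact: leq_trans k_gt2.
- exact: model_adj_sym.
- exact: model_adj_irr.
- by move=> a b /(congr1 (@of_model m N)); rewrite /= !tposK => /tpos_inj.
- by move=> a b /tpos_adj; rewrite /model_adj /= !tposK.
have -> : (to_model N \o @tpos m l) @: setT = arms_set N (fun i => 2 * l i).
  apply/setP => x; apply/imsetP/idP => [[a _ ->] | ].
    have /tpos_range : exists b : total_vertex (@star_sub_adj m l), tpos b = tpos a by exists a.
    rewrite /=; case: (tpos a) => [[i q]|] //= lt_q; rewrite inE //= inordK //.
    by rewrite ltnS (leq_trans (ltnW lt_q)).
  case: x => [[i q]|]; rewrite inE /=; last by exists (inl None); rewrite ?in_setT.
  move=> lt_q; have [a ta] : exists a : total_vertex (@star_sub_adj m l), tpos a = Some (i, val q) by apply/tpos_range.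
  by exists a; rewrite ?in_setT //= ta /= inord_val.
by apply: arms_set_peelable => // i; apply: leq_trans (le_lN i) _.
Qed.

Theorem theorem1p5 (m : nat) (l : 'I_m -> nat) :
  (forall i, 0 < l i) ->
  (m = 1 -> forall k, 3 <= k ->
     equitably_k_choosable (@total_adj (star_sub_vertex l) (@star_sub_adj m l)) k) /\
  (2 <= m -> forall k, m.+1 <= k ->
     equitably_k_choosable (@total_adj (star_sub_vertex l) (@star_sub_adj m l)) k).
Proof.
move=> _; split=> [m1 k k_ge3 | m_ge2 k m_lt_k]; apply: total_star_sub_choosable => //.
  by rewrite m1 (leq_trans _ k_ge3).
exact: leq_trans m_lt_k.
Qed.
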